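(* Let $G$ be a finite transitive permutation group with point stabiliser $H$ and let $p$ be a prime. Suppose there exists $T\le H$ such that (i) $N_G(T)\not\le H$, and (ii) for every $S\in\mathrm{Syl}_p(H)$, the group $\langle T,S\rangle$ contains a normal subgroup $H_0$ of $H$ which is weakly closed in $G$ and satisfies $H=N_G(H_0)$. Then $G$ has a subdegree divisible by $p$.
   Context: A subgroup $H_0$ of $H$ is weakly closed in $G$ if whenever $H_0^g\le H$ for some $g\in G$, there exists $h\in H$ with $H_0^g=H_0^h$. A subdegree is the size of an orbit of a point stabiliser. $\mathrm{Syl}_p(H)$ is the set of Sylow $p$-subgroups of $H$. *)

From mathcomp Require Import all_boot all_fingroup all_solvable.
Set Implicit Arguments. Unset Strict Implicit. Unset Printing Implicit Defensive.
Local Open Scope group_scope.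

Definition weakly_closed (gT : finGroupType) (H0 H G : {set gT}) : Prop :=
  forall g, g \in G -> H0 :^ g \subset H -> exists2 h, h \in H & H0 :^ g = H0 :^ h.

From mathcomp Require Import all_boot all_fingroup all_solvable.
Set Implicit Arguments. Unset Strict Implicit. Unset Printing Implicit Defensive.
Local Open Scope group_scope.

(* Pick g in N_G(T) outside H and put b = a^g.  If every subdegree were
   prime to p, a Sylow p-subgroup P of the stabiliser H_b would be Sylow in H,
   and H_b <= H^g.  As T = T^g <= H^g as well, the subgroup H0 <= <T, P>
   supplied for P lies in H^g, so H0^(g^-1) <= H.  Weak closure and normality
   of H0 in H then force g^-1 to normalise H0, i.e. g in N_G(H0) = H. *)

Lemma pHall_trans_index (gT : finGroupType) (pi : nat_pred) (G K P : {group gT}) :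
  K \subset G -> pi^'.-nat #|G : K| -> pi.-Hall(K) P -> pi.-Hall(G) P.
Proof.
move=> sKG pi'K /and3P [sPK piP pi'P]; apply/and3P; split => //.
  exact: subset_trans sKG.
by rewrite -(Lagrange_index sKG sPK) pnatM pi'K pi'P.
Qed.

Lemma Syl_sub_astab1 (aT : finGroupType) (rT : finType)
    (to : {action aT &-> rT}) (p : nat) (A : {group aT}) (x : rT) :
  prime p -> ~~ (p %| #|orbit to A x|) ->
  exists2 P : {group aT}, P \in 'Syl_p(A) & P \subset 'C_A[x | to].
Proof.
move=> pr_p p'orb; have [P sylP] := Sylow_exists p 'C_A[x | to].
exists P; last exact: pHall_sub sylP.
rewrite inE; apply: pHall_trans_index sylP; first exact: subsetIl.
by rewrite (p'natE _ pr_p) -card_orbit.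
Qed.

Lemma astab1_act_sub_conj (aT : finGroupType) (rT : finType)
    (to : {action aT &-> rT}) (G A : {group aT}) (x : rT) (g : aT) :
  A \subset G -> g \in G -> 'C_A[to x g | to] \subset 'C_G[x | to] :^ g.
Proof.
by move=> sAG gG; rewrite conjIg (conjGid gG) -astab1_act setSI.
Qed.

Lemma weakly_closed_normal_conj (gT : finGroupType) (H0 H G : {group gT}) (g : gT) :
  H0 <| H -> weakly_closed H0 H G -> g \in G -> H0 :^ g \subset H -> g \in 'N(H0).
Proof.
move=> /andP [_ nH0H] wcH0 gG sH0gH; have [h hH H0g] := wcH0 g gG sH0gH.
by apply/normP; rewrite H0g (normP (subsetP nH0H h hH)).
Qed.

Theorem lemma2p2 (Omega : finType) (G : {group {perm Omega}}) (a : Omega) (p : nat) :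
  prime p ->
  [transitive G, on [set: Omega] | 'P] ->
  (exists T : {group {perm Omega}},
     [/\ T \subset 'C_G[a | 'P],
         ~~ ('N_G(T) \subset 'C_G[a | 'P]) &
         forall S : {group {perm Omega}}, S \in 'Syl_p('C_G[a | 'P]) ->
           exists H0 : {group {perm Omega}},
             [/\ H0 \subset T <*> S,
                 H0 <| 'C_G[a | 'P],
                 weakly_closed H0 'C_G[a | 'P] G &
                 'C_G[a | 'P] = 'N_G(H0)]]) ->
  exists b : Omega, (p %| #|orbit 'P 'C_G[a | 'P] b|)%N.
Proof.
move=> pr_p _ [T [sTH nTH Syl_H0]]; set H := 'C_G[a | 'P].
have /subsetPn [g /setIP [gG nTg] gH] := nTH.
exists (aperm a g); apply: contraR gH => p'orb.
have [P sylP sPHb] := Syl_sub_astab1 pr_p p'orb.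
have [H0 [sH0TP nH0H wcH0 defH]] := Syl_H0 P sylP.
have sHbHg : 'C_H[aperm a g | 'P] \subset H :^ g.
  exact: astab1_act_sub_conj (subsetIl _ _) gG.
have sTPHg : T <*> P \subset H :^ g.
  by rewrite join_subG -{1}(normP nTg) conjSg sTH (subset_trans sPHb).
have nH0g' : g^-1 \in 'N_G(H0).
  rewrite inE groupV gG; apply: weakly_closed_normal_conj wcH0 _ _ => //.
    exact: groupVr.
  by rewrite sub_conjgV (subset_trans sH0TP).
by move: nH0g'; rewrite -defH groupV.
Qed.
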